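(* Let $n\geq 2$. In the double-edge digraph of the clustered graph of overlapping $n$-permutations, every directed cycle passes through exactly $n-1$ distinct clusters.
   Context: An $n$-permutation is a permutation $\pi_1\cdots\pi_n$ of $\{1,\ldots,n\}$. For a word $w$ of distinct numbers, $\mathrm{red}(w)$ is the permutation obtained by replacing the $i$-th smallest letter by $i$. For an $(n-1)$-permutation $\tau$, the cluster with signature $\tau$ is the set of all $n$-permutations $\pi$ with $\mathrm{red}(\pi_1\cdots\pi_{n-1})=\tau$. The clustered graph of overlapping $n$-permutations is the directed multigraph (loops allowed) whose vertices are the $(n-1)!$ clusters and in which every $n$-permutation $\pi$ contributes exactly one edge, going from the cluster containing $\pi$ to the cluster with signature $\mathrm{red}(\pi_2\cdots\pi_n)$. A double edge from $X$ to $Y$ is a pair of parallel edges from $X$ to $Y$. It is known that no pair of clusters is joined by three parallel edges, and that each cluster is the tail of exactly one double edge and the head of exactly one double edge. The double-edge digraph has the clusters as vertices and one arc $X\to Y$ for each double edge from $X$ to $Y$; by the preceding facts it is a disjoint union of directed cycles (a loop counting as a cycle through one cluster). *)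

From mathcomp Require Import all_boot.
From mathcomp Require Import fingroup perm.
Set Implicit Arguments. Unset Strict Implicit. Unset Printing Implicit Defensive.

(* red w : replace the i-th smallest letter by i (for words of distinct letters):
   the letter x becomes the number of letters of w that are <= x. *)
Definition red (w : seq nat) : seq nat :=
  [seq count (fun y => y <= x) w | x <- w].

Definition word (n : nat) (p : {perm 'I_n}) : seq nat :=
  [seq (p i).+1 | i <- enum 'I_n].

(* Cluster signatures: the (n-1)-permutations, as words over 1..n-1. *)
Definition is_cluster (n : nat) (X : seq nat) : bool :=
  perm_eq X (iota 1 n.-1).

(* Signature of the cluster containing pi: red(pi_1 ... pi_{n-1}). *)
Definition head_sig (n : nat) (p : {perm 'I_n}) : seq nat := red (take n.-1 (word p)).
(* Signature of the head cluster of the edge of pi: red(pi_2 ... pi_n). *)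
Definition tail_sig (n : nat) (p : {perm 'I_n}) : seq nat := red (behead (word p)).

Definition nedges (n : nat) (X Y : seq nat) : nat :=
  #|[pred p : {perm 'I_n} | (head_sig p == X) && (tail_sig p == Y)]|.

(* Arc relation of the double-edge digraph: a double edge from X to Y
   (no three parallel edges exist, so this is exactly two parallel edges). *)
Definition double_arc (n : nat) : rel (seq nat) :=
  fun X Y => [&& is_cluster n X, is_cluster n Y & nedges n X Y == 2].

From mathcomp Require Import all_boot.
From mathcomp Require Import fingroup perm.
From mathcomp Require Import zify.

Set Implicit Arguments. Unset Strict Implicit. Unset Printing Implicit Defensive.

(* Two distinct n-permutations pi, sigma in the same cluster and with the same
   tail signature order every pair of positions alike, except the pair of the
   first and last positions, which they must order oppositely.  Hence no middle
   letter of pi lies between pi_1 and pi_n, so pi_n may be replaced by pi_1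
   without changing red(pi_2 ... pi_n): the signature of the head of the edge
   is the left rotation of that of its tail.  A double edge thus goes from X to
   rot 1 X, the cycles of the double-edge digraph are rotation orbits, and an
   orbit of a word of n-1 distinct letters has exactly n-1 elements. *)

Definition same_order (u v : seq nat) : Prop :=
  forall i j, i < size u -> j < size u ->
    (nth 0 u i <= nth 0 u j) = (nth 0 v i <= nth 0 v j).

Lemma count_leq_ltn (u : seq nat) x y : x \in u -> y < x ->
  count (leq^~ y) u < count (leq^~ x) u.
Proof.
elim: u => [//|z u IHu]; rewrite in_cons => /orP [/eqP <-|xu] yx /=.
  rewrite leqnn (leqNgt x y) yx /= add0n add1n ltnS.
  by apply: sub_count => w /= wy; apply: leq_trans wy (ltnW yx).
have := IHu xu yx.
have : (z <= y) <= (z <= x).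
  by case: (boolP (z <= y)) => // zy; rewrite (leq_trans zy (ltnW yx)).
lia.
Qed.

Lemma leq_count (u : seq nat) x y : x \in u ->
  (x <= y) = (count (leq^~ x) u <= count (leq^~ y) u).
Proof.
move=> xu; case: (leqP x y) => xy.
  by apply/esym; apply: sub_count => w /= wx; apply: leq_trans wx xy.
by apply/esym/negbTE; rewrite -ltnNge; apply: count_leq_ltn.
Qed.

Lemma size_red u : size (red u) = size u.
Proof. by rewrite size_map. Qed.

Lemma nth_red u i : i < size u -> nth 0 (red u) i = count (leq^~ (nth 0 u i)) u.
Proof. by move=> ltiu; rewrite (nth_map 0). Qed.

Lemma same_order_red u : same_order u (red u).
Proof. by move=> i j ltiu ltju; rewrite !nth_red // (leq_count _ (mem_nth 0 ltiu)). Qed.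

Lemma red_eq_iff_same_order u v : size u = size v -> red u = red v <-> same_order u v.
Proof.
move=> szuv; split=> [redE i j ltiu ltju | ord_uv].
  by rewrite same_order_red // redE -same_order_red -?szuv.
apply: (eq_from_nth (x0 := 0)); first by rewrite !size_red.
move=> i; rewrite size_red => ltiu; rewrite !nth_red -?szuv //.
rewrite -[in LHS](mkseq_nth 0 u) -[in RHS](mkseq_nth 0 v) !count_map szuv.
apply: eq_in_count => j; rewrite mem_iota /= => ltju.
by rewrite !nth_mkseq -?szuv //; apply: ord_uv; rewrite // szuv.
Qed.

Lemma red_rot u : red (rot 1 u) = rot 1 (red u).
Proof. by rewrite /red -map_rot; apply: eq_map => x; apply/seq.permP; rewrite perm_rot. Qed.

Lemma red_rcons m x y : x \notin m -> y \notin m ->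
  {in m, forall z, (z <= x) = (z <= y)} -> red (rcons m x) = red (rcons m y).
Proof.
move=> xm ym xy_m; rewrite /red !map_rcons -!cats1 !count_cat /= !leqnn.
have -> : count (leq^~ x) m = count (leq^~ y) m by apply: eq_in_count.
congr (_ ++ _); apply/eq_in_map => z zm /=.
have [zx zy] : z != x /\ z != y.
  by split; [apply: contraNneq xm | apply: contraNneq ym] => <-.
rewrite !count_cat /=; move: (xy_m z zm) zx zy; lia.
Qed.

Lemma count_leq_iota1 x k : count (leq^~ x) (iota 1 k) = minn x k.
Proof.
elim: k => [|k IHk]; first by rewrite minn0.
by rewrite -[k.+1]addn1 iotaD count_cat IHk /=; lia.
Qed.

Lemma red_perm_iota u k : perm_eq u (iota 1 k) -> red u = u.
Proof.
move=> pu; rewrite -[RHS]map_id; apply/eq_in_map => x xu /=.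
have : x \in iota 1 k by rewrite -(perm_mem pu).
by rewrite (seq.permP pu) count_leq_iota1 mem_iota; lia.
Qed.

Lemma red_behead_rot (a : seq nat) n : 1 < n -> size a = n -> uniq a ->
  (forall k, 0 < k < n.-1 -> (nth 0 a k <= nth 0 a 0) = (nth 0 a k <= nth 0 a n.-1)) ->
  red (behead a) = rot 1 (red (take n.-1 a)).
Proof.
case: a => [|a0 s]; first by move=> ? <-.
case/lastP: s => [|m al]; first by move=> ? <-.
move=> n_gt1 <- /=; rewrite size_rcons /=.
rewrite mem_rcons in_cons rcons_uniq negb_or => /andP [/andP [_ a0m] /andP [alm _]] between.
rewrite -cats1 take_size_cat // -red_rot rot1_cons cats1.
apply: red_rcons => // z /(nthP 0) [k ltkm <-].
by have := between k.+1; rewrite /= !nth_rcons ltkm ltnn eqxx /= => /(_ ltkm) ->.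
Qed.

Lemma leq_ends_between x y z : z != x -> z != y -> (z <= x) != (z <= y) ->
  (x <= y) = (z <= y).
Proof. lia. Qed.

Section SameWindows.

Variables (n : nat) (a b : seq nat).
Hypotheses (n_gt1 : 1 < n) (size_a : size a = n) (size_b : size b = n).
Hypotheses (uniq_a : uniq a) (uniq_b : uniq b).
Hypothesis red_take : red (take n.-1 a) = red (take n.-1 b).
Hypothesis red_behead : red (behead a) = red (behead b).

Lemma take_same_order i j : i < n.-1 -> j < n.-1 ->
  (nth 0 a i <= nth 0 a j) = (nth 0 b i <= nth 0 b j).
Proof.
move=> ltin ltjn.
have szE : size (take n.-1 a) = size (take n.-1 b) by rewrite !size_take size_a size_b.
have := proj1 (red_eq_iff_same_order szE) red_take i j.
by rewrite size_takel ?size_a ?leq_pred // !nth_take //; apply.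
Qed.

Lemma behead_same_order i j : 0 < i < n -> 0 < j < n ->
  (nth 0 a i <= nth 0 a j) = (nth 0 b i <= nth 0 b j).
Proof.
move=> hi hj.
have szE : size (behead a) = size (behead b) by rewrite !size_behead size_a size_b.
have := proj1 (red_eq_iff_same_order szE) red_behead i.-1 j.-1.
by rewrite size_behead size_a !nth_behead !prednK; try lia; apply; lia.
Qed.

Lemma same_order_of_ends :
  (nth 0 a 0 <= nth 0 a n.-1) = (nth 0 b 0 <= nth 0 b n.-1) -> same_order a b.
Proof.
move=> endsE i j; rewrite size_a => ltin ltjn.
have [/orP [] /andP [/eqP -> /eqP ->] | /orP [] /andP [hi hj]] :
    (i == 0) && (j == n.-1) || (i == n.-1) && (j == 0)
    \/ (i < n.-1) && (j < n.-1) || (0 < i) && (0 < j) by lia.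
- by [].
- have : nth 0 a 0 != nth 0 a n.-1 by rewrite nth_uniq ?size_a //; lia.
  have : nth 0 b 0 != nth 0 b n.-1 by rewrite nth_uniq ?size_b //; lia.
  by move: endsE; lia.
- exact: take_same_order.
- by apply: behead_same_order; lia.
Qed.

Lemma middle_not_between k : red a != red b -> 0 < k < n.-1 ->
  (nth 0 a k <= nth 0 a 0) = (nth 0 a k <= nth 0 a n.-1).
Proof.
move=> red_ab hk.
have ends_flip : (nth 0 a 0 <= nth 0 a n.-1) != (nth 0 b 0 <= nth 0 b n.-1).
  apply: contra red_ab => /eqP /same_order_of_ends.
  by rewrite -red_eq_iff_same_order ?size_a ?size_b // => ->.
have distinct s : uniq s -> size s = n ->
    nth 0 s k != nth 0 s 0 /\ nth 0 s k != nth 0 s n.-1.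
  by move=> uniq_s size_s; rewrite !nth_uniq ?size_s; try split; lia.
have [ak_a0 ak_al] := distinct a uniq_a size_a.
have [bk_b0 bk_bl] := distinct b uniq_b size_b.
have headE := @take_same_order k 0 ltac:(lia) ltac:(lia).
have tailE := @behead_same_order k n.-1 ltac:(lia) ltac:(lia).
apply: (contraNeq _ ends_flip) => a_between.
have b_between : (nth 0 b k <= nth 0 b 0) != (nth 0 b k <= nth 0 b n.-1).
  by rewrite -headE -tailE.
by rewrite (leq_ends_between ak_a0 ak_al a_between) tailE
           (leq_ends_between bk_b0 bk_bl b_between).
Qed.

End SameWindows.

Lemma size_word n (p : {perm 'I_n}) : size (word p) = n.
Proof. by rewrite size_map size_enum_ord. Qed.

Lemma uniq_word n (p : {perm 'I_n}) : uniq (word p).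
Proof.
rewrite map_inj_uniq ?enum_uniq // => i j /eqP; rewrite eqSS => /eqP.
by move/val_inj/perm_inj.
Qed.

Lemma perm_word_iota n (p : {perm 'I_n}) : perm_eq (word p) (iota 1 n).
Proof.
apply: uniq_perm; [exact: uniq_word | exact: iota_uniq |] => x.
rewrite mem_iota; apply/mapP/idP => [[i _ ->] | x_in].
  by have := ltn_ord (p i); lia.
have ltxn : x.-1 < n by lia.
exists ((p^-1)%g (Ordinal ltxn)); first by rewrite mem_enum.
by rewrite permKV /=; lia.
Qed.

Lemma word_inj n : injective (@word n).
Proof.
move=> p q /eq_in_map wordE; apply/permP => i; apply/val_inj.
by have /eqP := wordE i (mem_enum _ i); rewrite eqSS => /eqP.
Qed.

Lemma double_arc_rot n X Y : 1 < n -> double_arc n X Y -> Y = rot 1 X.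
Proof.
move=> n_gt1 /and3P [_ _ /eqP two_edges].
have : 1 < nedges n X Y by rewrite two_edges.
case/card_gt1P => p [q [+ + p_neq_q]]; rewrite !inE.
rewrite /head_sig /tail_sig => /andP [/eqP <- /eqP <-] /andP [/eqP headE /eqP tailE].
have red_word (r : {perm 'I_n}) : red (word r) = word r.
  exact: red_perm_iota (perm_word_iota r).
have red_pq : red (word p) != red (word q).
  by rewrite !red_word; apply: contra p_neq_q => /eqP /word_inj ->.
apply: red_behead_rot; rewrite ?size_word ?uniq_word // => k.
by apply: (middle_not_between (b := word q)); rewrite ?size_word ?uniq_word ?headE ?tailE.
Qed.

Lemma iter_rot1 (T : Type) (s : seq T) k : k <= size s -> iter k (rot 1) s = rot k s.
Proof.
elim: k => [|k IHk] lt_ks; first by rewrite rot0.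
by rewrite iterS IHk ?(ltnW lt_ks) // (rotS lt_ks).
Qed.

Lemma rot_uniq_neq (T : eqType) (s : seq T) k : uniq s -> 0 < k < size s -> rot k s != s.
Proof.
case: s => [|x0 s'] uniq_s /andP [k_gt0 lt_ks] //.
apply/eqP => /(congr1 (nth x0 ^~ 0)).
rewrite nth_cat size_drop subn_gt0 lt_ks nth_drop addn0 => /eqP.
by rewrite nth_uniq //; case: k k_gt0 {lt_ks}.
Qed.

Lemma size_fcycle_rot (T : eqType) (x : seq T) c : 0 < size x -> uniq x ->
  uniq (x :: c) -> fcycle (rot 1) (x :: c) -> size (x :: c) = size x.
Proof.
move=> x_gt0 uniq_x uniq_c /fpathE; rewrite size_rcons => cE.
have [trajE iterE] :
    x :: c = traject (rot 1) x (size c).+1 /\ x = iter (size c).+1 (rot 1) x.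
  by apply/pair_equal_spec/rcons_inj; rewrite -trajectSr trajectS rcons_cons cE.
rewrite trajE in uniq_c; rewrite /=.
case: (ltngtP (size c).+1 (size x)) => // [lt_cx | lt_xc].
  have := rot_uniq_neq (k := (size c).+1) uniq_x; rewrite lt_cx -iter_rot1 ?(ltnW lt_cx) //.
  by rewrite -iterE eqxx => /(_ isT).
have : uniq (traject (rot 1) x (size x).+1).
  by rewrite -(take_traject _ _ lt_xc) take_uniq.
rewrite looping_uniq /looping iter_rot1 // rot_size.
by case: (size x) x_gt0 => // m _; rewrite trajectS mem_head.
Qed.

Theorem lemma4 (n : nat) (hn : 2 <= n) (c : seq (seq nat)) :
  c != [::] -> uniq c -> path.cycle (double_arc n) c -> size c = n.-1.
Proof.
case: c => [//|x c] _ uniq_c cyc.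
have /and3P [cluster_x _ _] : double_arc n x (head x c).
  by case: c cyc {uniq_c} => [|y c] /= /andP [].
have size_x : size x = n.-1 by rewrite (perm_size cluster_x) size_iota.
rewrite -size_x; apply: size_fcycle_rot; first by rewrite size_x; lia.
- by rewrite (perm_uniq cluster_x) iota_uniq.
- exact: uniq_c.
apply: sub_cycle cyc => X Y /(double_arc_rot hn) ->; exact: eqxx.
Qed.
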